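(* Let $\mathbf{x}=(\mathbf{x}_1,\mathbf{x}_2,\mathbf{x}_3)$ have i.i.d. Bernoulli$(0.5)$ coordinates, and let $\mathbf{y}$ be distributed as follows: if $\mathbf{x}_3=1$, $\mathbf{y}=\mathbf{x}_1$ with probability $0.9$ and $1-\mathbf{x}_1$ otherwise; if $\mathbf{x}_3=0$, $\mathbf{y}=\mathbf{x}_2$ with probability $0.9$ and $1-\mathbf{x}_2$ otherwise. Let $e_{\mathrm{encode}}(\mathbf{x})=\xi_1=[1,0,0]$ if $\mathbf{x}_3=1$ and $\xi_2=[0,1,0]$ otherwise, and let $e_{\mathbf{c}}(\mathbf{x})=\xi_3=[0,0,1]$ for all $\mathbf{x}$. Then $\mathrm{EVAL\text{-}X}(q,e_{\mathrm{encode}})>\mathrm{EVAL\text{-}X}(q,e_{\mathbf{c}})$.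
   Context: $q$ denotes the joint distribution of $(\mathbf{y},\mathbf{x})$ just described. An explanation is a map $e$ from inputs to selection masks in $\{0,1\}^3$; $\mathbf{x}_{\mathbf{v}}$ denotes the values of the coordinates selected by $\mathbf{v}$, and $\mathbf{x}_{e(\mathbf{x})}=(\mathbf{v},\mathbf{a})$ is the pair of selection and selected values. The EVAL-X score is $\mathrm{EVAL\text{-}X}(q,e)=\mathbb{E}_{(\mathbf{v},\mathbf{a})\sim q(\mathbf{x}_{e(\mathbf{x})})}\mathbb{E}_{\mathbf{y}\sim q(\mathbf{y}\mid \mathbf{x}_{e(\mathbf{x})}=(\mathbf{v},\mathbf{a}))}[\log q(\mathbf{y}\mid \mathbf{x}_{\mathbf{v}}=\mathbf{a})]$. *)

From HB Require Import structures.
From mathcomp Require Import all_boot all_order all_algebra.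
From mathcomp Require Import reals exp.
Set Implicit Arguments. Unset Strict Implicit. Unset Printing Implicit Defensive.
Import Order.TTheory GRing.Theory Num.Theory.
Local Open Scope ring_scope.

(* Inputs x = (x_1,x_2,x_3) are indexed by 'I_3 (index 0 = x_1, 1 = x_2, 2 = x_3). *)
Definition input := {ffun 'I_3 -> bool}.
Definition mask := {ffun 'I_3 -> bool}.

Definition x1 : 'I_3 := @Ordinal 3 0 isT.
Definition x2 : 'I_3 := @Ordinal 3 1 isT.
Definition x3 : 'I_3 := @Ordinal 3 2 isT.

Section Model.
Variable R : realType.

Definition qx (x : input) : R := (1 / 2) ^+ 3.

Definition qyx (x : input) (y : bool) : R :=
  let z := if x x3 then x x1 else x x2 in
  if y == z then 9 / 10 else 1 / 10.

Definition qjoint (y : bool) (x : input) : R := qx x * qyx x y.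

(* The selected values x_v, canonically encoded as an element of {0,1}^3
   with unselected coordinates set to false; x_v = a means restrict v x = a. *)
Definition restrict (v : mask) (x : input) : input := [ffun i => v i && x i].

Definition qcond (v : mask) (a : input) (y : bool) : R :=
  (\sum_(x : input | restrict v x == a) qjoint y x) /
  (\sum_(x : input | restrict v x == a) qx x).

Definition sel_event (e : input -> mask) (v : mask) (a : input) (x : input) : bool :=
  (e x == v) && (restrict v x == a).

Definition qsel (e : input -> mask) (v : mask) (a : input) : R :=
  \sum_(x : input | sel_event e v a x) qx x.

Definition qcond_sel (e : input -> mask) (v : mask) (a : input) (y : bool) : R :=
  (\sum_(x : input | sel_event e v a x) qjoint y x) / qsel e v a.

Definition evalx (e : input -> mask) : R :=
  \sum_(v : mask) \sum_(a : input)
    qsel e v a * \sum_(y : bool) qcond_sel e v a y * ln (qcond v a y).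

End Model.

Definition xi1 : mask := [ffun i : 'I_3 => i == x1].
Definition xi2 : mask := [ffun i : 'I_3 => i == x2].
Definition xi3 : mask := [ffun i : 'I_3 => i == x3].

Definition e_encode (x : input) : mask := if x x3 then xi1 else xi2.
Definition e_c (x : input) : mask := xi3.

From Pilot Require Import Defs.
From mathcomp Require Import all_boot all_order all_algebra.
From mathcomp Require Import reals exp.
From mathcomp Require Import ring lra.

Set Implicit Arguments.
Unset Strict Implicit.
Unset Printing Implicit Defensive.
Import Order.TTheory GRing.Theory Num.Theory.
Local Open Scope ring_scope.

(** Averaging over the selection event and then over [x] inside it is the
    same as averaging over [x], so EVAL-X is an expectation over [x].  Under
    [e_c] the mask reveals only [x_3], of which [y] is independent: both
    conditionals are uniform and EVAL-X is [ln (1/2)].  Under [e_encode] the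
    choice of mask reveals [x_3] as well, so the selection event determines
    the law of [y] exactly ([9/10] against [1/10]), whereas [q(y | x_v = a)]
    does not know [x_3] and predicts only [7/10] against [3/10]; EVAL-X is
    then [9/10 ln (7/10) + 1/10 ln (3/10)], which exceeds [ln (1/2)]. *)

Definition input_of (b1 b2 b3 : bool) : input :=
  [ffun i : 'I_3 => nth false [:: b1; b2; b3] i].

Lemma input_of1 b1 b2 b3 : input_of b1 b2 b3 x1 = b1. Proof. by rewrite ffunE. Qed.
Lemma input_of2 b1 b2 b3 : input_of b1 b2 b3 x2 = b2. Proof. by rewrite ffunE. Qed.
Lemma input_of3 b1 b2 b3 : input_of b1 b2 b3 x3 = b3. Proof. by rewrite ffunE. Qed.

Lemma input_ofK (x : input) : input_of (x x1) (x x2) (x x3) = x.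
Proof.
by apply/ffunP => -[[|[|[|n]]] //= lt_n3]; rewrite ffunE; congr (x _); apply: val_inj.
Qed.

Lemma input_ind (P : input -> Prop) :
  (forall b1 b2 b3, P (input_of b1 b2 b3)) -> forall x, P x.
Proof. by move=> P_input_of x; rewrite -[x]input_ofK. Qed.

Lemma eq_input (x y : input) :
  (x == y) = [&& x x1 == y x1, x x2 == y x2 & x x3 == y x3].
Proof.
apply/eqP/and3P => [->|[/eqP e1 /eqP e2 /eqP e3]]; first by rewrite !eqxx.
by rewrite -(input_ofK x) -(input_ofK y) e1 e2 e3.
Qed.

Lemma eq_input_of a1 a2 a3 b1 b2 b3 :
  (input_of a1 a2 a3 == input_of b1 b2 b3) = [&& a1 == b1, a2 == b2 & a3 == b3].
Proof. by rewrite eq_input !input_of1 !input_of2 !input_of3. Qed.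

Lemma restrict_input_of v1 v2 v3 b1 b2 b3 :
  restrict (input_of v1 v2 v3) (input_of b1 b2 b3) =
  input_of (v1 && b1) (v2 && b2) (v3 && b3).
Proof. by apply/eqP; rewrite eq_input !ffunE /x1 /x2 /x3 /= !eqxx. Qed.

Lemma xi1E : xi1 = input_of true false false.
Proof. by apply/eqP; rewrite eq_input !ffunE. Qed.

Lemma xi2E : xi2 = input_of false true false.
Proof. by apply/eqP; rewrite eq_input !ffunE. Qed.

Lemma xi3E : xi3 = input_of false false true.
Proof. by apply/eqP; rewrite eq_input !ffunE. Qed.

Lemma sum_input (V : nmodType) (F : input -> V) :
  \sum_(x : input) F x =
  \sum_(b1 : bool) \sum_(b2 : bool) \sum_(b3 : bool) F (input_of b1 b2 b3).
Proof.
rewrite (reindex (fun b : bool * bool * bool => input_of b.1.1 b.1.2 b.2)) /=.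
  by rewrite pair_big /= pair_big.
exists (fun x : input => (x x1, x x2, x x3)) => [[[b1 b2] b3]|x] _ /=.
  by rewrite input_of1 input_of2 input_of3.
exact: input_ofK.
Qed.

Lemma card_input : #|{: input}| = 8%N.
Proof. by rewrite card_ffun card_bool card_ord. Qed.

Section EvalX.
Context {R : realType}.

Lemma sum_qsel (e : input -> Defs.mask) (g : Defs.mask -> input -> R) :
  \sum_(v : Defs.mask) \sum_(a : input) qsel R e v a * g v a =
  \sum_(x : input) qx R x * g (e x) (restrict (e x) x).
Proof.
under eq_bigr => v _ do under eq_bigr => a _ do
  rewrite /qsel mulr_suml big_mkcond /=.
under eq_bigr => v _ do rewrite exchange_big /=.
rewrite exchange_big /=; apply: eq_bigr => x _.
rewrite (bigD1 (e x)) //= (bigD1 (restrict (e x) x)) //= /sel_event !eqxx /=.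
rewrite [in X in _ + X]big1 ?addr0 => [|v /negbTE neq_v].
  by rewrite big1 ?addr0 // => a /negbTE neq_a; rewrite eq_sym neq_a.
by apply: big1 => a _; rewrite eq_sym neq_v.
Qed.

Definition score (e : input -> Defs.mask) (x : input) : R :=
  \sum_(y : bool) qcond_sel R e (e x) (restrict (e x) x) y *
                  ln (qcond R (e x) (restrict (e x) x) y).

Lemma evalxE (e : input -> Defs.mask) :
  evalx R e = \sum_(x : input) qx R x * score e x.
Proof. exact: sum_qsel. Qed.

Lemma evalx_cst (e : input -> Defs.mask) (c : R) :
  (forall x, score e x = c) -> evalx R e = c.
Proof.
move=> score_c; rewrite evalxE; under eq_bigr => x _ do rewrite score_c /qx.
by rewrite sumr_const card_input -[_ *+ 8]mulr_natr; field.
Qed.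

Local Ltac enumerate_inputs :=
  apply: input_ind; do 4 case;
  rewrite /qcond_sel /qcond /qsel /sel_event /qjoint /qx /qyx /e_encode /e_c;
  rewrite ?(big_mkcond (fun x => _ && _)) ?(big_mkcond (fun x => _ == _));
  rewrite !sum_input !big_bool;
  rewrite ?xi1E ?xi2E ?xi3E !input_of1 !input_of2 !input_of3 /=;
  rewrite !restrict_input_of !eq_input_of /= ?(addr0, add0r, mulr0, mul0r);
  field.

Lemma qcond_sel_e_encode (x : input) (y : bool) :
  qcond_sel R e_encode (e_encode x) (restrict (e_encode x) x) y = qyx R x y.
Proof. by move: x y; enumerate_inputs. Qed.

Lemma qcond_e_encode (x : input) (y : bool) :
  qcond R (e_encode x) (restrict (e_encode x) x) y =
  if y == (if x x3 then x x1 else x x2) then 7 / 10 else 3 / 10.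
Proof. by move: x y; enumerate_inputs. Qed.

Lemma qcond_sel_e_c (x : input) (y : bool) :
  qcond_sel R e_c (e_c x) (restrict (e_c x) x) y = 1 / 2.
Proof. by move: x y; enumerate_inputs. Qed.

Lemma qcond_e_c (x : input) (y : bool) :
  qcond R (e_c x) (restrict (e_c x) x) y = 1 / 2.
Proof. by move: x y; enumerate_inputs. Qed.

Lemma score_e_c (x : input) : score e_c x = ln (1 / 2).
Proof. by rewrite /score big_bool /= !qcond_sel_e_c !qcond_e_c; field. Qed.

Lemma score_e_encode (x : input) :
  score e_encode x = 9 / 10 * ln (7 / 10) + 1 / 10 * ln (3 / 10).
Proof.
rewrite /score big_bool /= !qcond_sel_e_encode !qcond_e_encode /qyx.
by case: (if x x3 then x x1 else x x2) => //=; rewrite addrC.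
Qed.

End EvalX.

Lemma ln_half_lt (R : realType) :
  ln (1 / 2 : R) < 9 / 10 * ln (7 / 10) + 1 / 10 * ln (3 / 10).
Proof.
have [half_gt0 seven_gt0 three_gt0] :
    [/\ 0 < 1 / 2 :> R, 0 < 7 / 10 :> R & 0 < 3 / 10 :> R] by split; lra.
have lhs_pos : (1 / 2 : R) ^+ 10 \in Num.pos by rewrite posrE exprn_gt0.
have rhs_pos : (7 / 10 : R) ^+ 9 * (3 / 10) \in Num.pos.
  by rewrite posrE mulr_gt0 ?exprn_gt0.
have : (1 / 2 : R) ^+ 10 < (7 / 10) ^+ 9 * (3 / 10) by rewrite !exprS expr0; lra.
rewrite -(ltr_ln lhs_pos rhs_pos) lnM ?posrE ?exprn_gt0 // !lnXn // !mulr_natl.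
lra.
Qed.

Theorem proposition2 (R : realType) : evalx R e_encode > evalx R e_c.
Proof.
by rewrite (evalx_cst score_e_encode) (evalx_cst score_e_c) ln_half_lt.
Qed.
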